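(* Let $\mathcal{B}$ be a denumerable and measurable partition of $\Omega$ with $\underline{P}(B)>0$ for every $B\in\mathcal{B}$, and let $\Pi$ be the set of probability measures compatible with $\underline{P}$. For any event $A\in\mathscr{B}(\Omega)$, under the generalized Bayes rule, (i) $\mathcal{B}$ cannot induce sure loss in $A$, and (ii) $\mathcal{B}$ cannot contract $A$.
   Context: $\Omega$ is a separable, completely metrizable space with Borel $\sigma$-algebra $\mathscr{B}(\Omega)$; $\underline{P}$ is a Choquet capacity of order 2 on $\mathscr{B}(\Omega)$ (a coherent lower probability with weakly compact set of dominating measures satisfying $\underline{P}(A\cup B)\ge\underline{P}(A)+\underline{P}(B)-\underline{P}(A\cap B)$); $\Pi=\{P:P\ge\underline{P}\}$, $\underline{P}(A)=\inf_{P\in\Pi}P(A)$, $\overline{P}(A)=\sup_{P\in\Pi}P(A)=1-\underline{P}(A^c)$. Generalized Bayes rule: $\underline{P}_{\mathfrak{B}}(A\mid B)=\inf_{P\in\Pi}P(A\cap B)/P(B)$, $\overline{P}_{\mathfrak{B}}(A\mid B)=\sup_{P\in\Pi}P(A\cap B)/P(B)$. For an updating rule with conditional lower/upper probabilities $\underline{P}_\bullet,\overline{P}_\bullet$: $\mathcal{B}$ induces sure loss in $A$ if $\inf_{B\in\mathcal{B}}\underline{P}_\bullet(A\mid B)>\overline{P}(A)$ or $\sup_{B\in\mathcal{B}}\overline{P}_\bullet(A\mid B)<\underline{P}(A)$. $\mathcal{B}$ strictly contracts $A$ if $\underline{P}(A)<\inf_{B\in\mathcal{B}}\underline{P}_\bullet(A\mid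 B)\le\sup_{B\in\mathcal{B}}\overline{P}_\bullet(A\mid B)<\overline{P}(A)$; $\mathcal{B}$ contracts $A$ if this holds with either (but not both) of the two outer strict inequalities allowed to be an equality. *)

From HB Require Import structures.
From mathcomp Require Import all_boot all_order all_algebra.
From mathcomp Require Import all_classical all_reals all_analysis.
Set Implicit Arguments. Unset Strict Implicit. Unset Printing Implicit Defensive.
Import Order.TTheory GRing.Theory Num.Theory.
Import numFieldNormedType.Exports.
Local Open Scope classical_set_scope.
Local Open Scope ring_scope.

Definition borel_type {R : realType} (Omega : completePseudoMetricType R) :=
  g_sigma_algebraType (@open Omega).

(* Omega is separable and completely metrizable (it carries a complete metric,
   Hausdorff so the pseudometric is a metric). *)
Definition separable_complete_metric {R : realType}
    (Omega : completePseudoMetricType R) : Prop :=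
  hausdorff_space Omega /\ exists S : set Omega, countable S /\ dense S.

Section Imprecise.
Variables (R : realType) (Omega : completePseudoMetricType R).
Local Notation T := (borel_type Omega).
Local Notation prob := (probability T R).

Definition credal (lowP : set T -> R) : set prob :=
  [set P | forall A, measurable A -> ((lowP A)%:E <= P A)%E].

Definition upper (lowP : set T -> R) (A : set T) : \bar R :=
  ereal_sup [set P A | P in credal lowP].

Definition bcontinuous (f : Omega -> R) : Prop :=
  continuous f /\ exists M : R, forall x, `|f x| <= M.

Definition weak_nbhs (P : prob) (N : set prob) : Prop :=
  exists (n : nat) (f : nat -> Omega -> R) (e : R),
    0 < e /\ (forall i, (i < n)%N -> bcontinuous (f i)) /\
    [set Q : prob | forall i, (i < n)%N ->
       `|Rintegral Q setT (f i) - Rintegral P setT (f i)| < e] `<=` N.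

Definition weakly_compact (S : set prob) : Prop :=
  forall F : set_system prob, ProperFilter F -> F S ->
    exists2 P, S P & forall N A, weak_nbhs P N -> F A -> N `&` A !=set0.

(* Choquet capacity of order 2: coherent lower probability (lower envelope of
   Pi), Pi weakly compact, and 2-monotone. *)
Definition choquet_capacity2 (lowP : set T -> R) : Prop :=
  [/\ forall A, measurable A ->
        (lowP A)%:E = ereal_inf [set P A | P in credal lowP],
      weakly_compact (credal lowP) &
      forall A B, measurable A -> measurable B ->
        lowP A + lowP B - lowP (A `&` B) <= lowP (A `|` B)].

Definition cond_ratio (P : prob) (A B : set T) : R :=
  fine (P (A `&` B)) / fine (P B).

Definition lowGBR (lowP : set T -> R) (A B : set T) : \bar R :=
  ereal_inf [set (cond_ratio P A B)%:E | P in credal lowP].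

Definition upGBR (lowP : set T -> R) (A B : set T) : \bar R :=
  ereal_sup [set (cond_ratio P A B)%:E | P in credal lowP].

Definition measurable_partition (B : nat -> set T) : Prop :=
  [/\ forall n, measurable (B n), trivIset setT B & \bigcup_n B n = setT].

(* Sure loss / contraction for an updating rule (lowc, upc), with
   unconditional lower/upper probabilities lowA, upA of the event A. *)
Definition induces_sure_loss (lowc upc : set T -> set T -> \bar R)
    (lowA upA : \bar R) (B : nat -> set T) (A : set T) : Prop :=
  (upA < ereal_inf (range (fun n => lowc A (B n))))%E \/
  (ereal_sup (range (fun n => upc A (B n))) < lowA)%E.

Definition strictly_contracts (lowc upc : set T -> set T -> \bar R)
    (lowA upA : \bar R) (B : nat -> set T) (A : set T) : Prop :=
  let i := ereal_inf (range (fun n => lowc A (B n))) in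
  let s := ereal_sup (range (fun n => upc A (B n))) in
  (lowA < i)%E /\ (i <= s)%E /\ (s < upA)%E.

Definition contracts (lowc upc : set T -> set T -> \bar R)
    (lowA upA : \bar R) (B : nat -> set T) (A : set T) : Prop :=
  let i := ereal_inf (range (fun n => lowc A (B n))) in
  let s := ereal_sup (range (fun n => upc A (B n))) in
  ((lowA <= i)%E /\ (i <= s)%E /\ (s < upA)%E) \/
  ((lowA < i)%E /\ (i <= s)%E /\ (s <= upA)%E).

End Imprecise.

From HB Require Import structures.
From mathcomp Require Import all_boot all_order all_algebra.
From mathcomp Require Import all_classical all_reals all_analysis.

Set Implicit Arguments.
Unset Strict Implicit.

Import Order.TTheory GRing.Theory Num.Theory.
Local Open Scope classical_set_scope.
Local Open Scope ring_scope.

(* Every P in Pi is a convex combination, over the cells of the partition, of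
   its conditional probabilities P(A | B n).  Hence P(A) lies between the
   infimum of the lower and the supremum of the upper conditional
   probabilities; taking inf and sup over Pi gives
   [inf_n lowGBR(A | B n) <= lowP A <= upper A <= sup_n upGBR(A | B n)],
   i.e. conditioning on B dilates A, which excludes both sure loss and
   contraction. *)

Section total_probability.
Context d (T : measurableType d) (R : realType).
Variables (B : nat -> set T).
Hypotheses (mB : forall n, measurable (B n)) (tB : trivIset setT B)
  (cB : \bigcup_n B n = setT).

Lemma measure_partition_series (mu : {measure set T -> \bar R}) (A : set T) :
  measurable A -> mu A = (\sum_(0 <= n <oo) mu (A `&` B n))%E.
Proof.
move=> mA; have eA : A = \bigcup_n (A `&` B n) by rewrite -setI_bigcupr cB setIT.
rewrite {1}eA measure_semi_bigcup -?eA //; last exact: trivIset_setIl.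
by move=> n; exact: measurableI.
Qed.

Variable P : probability T R.

Lemma probability_partition_series1 : (\sum_(0 <= n <oo) P (B n))%E = 1%E.
Proof.
rewrite -(probability_setT P) (measure_partition_series _ measurableT).
by apply: eq_eseriesr => n _; rewrite setTI.
Qed.

Variable A : set T.
Hypotheses (mA : measurable A) (PB_gt0 : forall n, 0 < fine (P (B n))).

Let ratio n := fine (P (A `&` B n)) / fine (P (B n)).

Lemma probability_cellE n : P (A `&` B n) = ((ratio n)%:E * P (B n))%E.
Proof.
have mAB : measurable (A `&` B n) by exact: measurableI.
rewrite -[P (B n)]fineK ?fin_num_measure // -EFinM divfK ?gt_eqF //.
by rewrite fineK ?fin_num_measure.
Qed.

Lemma total_probability_lb (c : \bar R) :
  (forall n, c <= (ratio n)%:E)%E -> (c <= P A)%E.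
Proof.
case: c => [c| |] c_le; [|by have := c_le 0%N; rewrite leye_eq|by rewrite leNye].
have [c_le0|c_gt0] := lerP c 0; first by rewrite (le_trans _ (measure_ge0 P A)).
rewrite measure_partition_series // -[c%:E]mule1 -probability_partition_series1.
rewrite -nneseriesZl //; apply: lee_nneseries => [n _ _|n _].
  by rewrite mule_ge0 // lee_fin ltW.
apply: le_trans (lee_wpmul2r (measure_ge0 P (B n)) (c_le n)) _.
by rewrite -probability_cellE.
Qed.

Lemma total_probability_ub (c : \bar R) :
  (forall n, (ratio n)%:E <= c)%E -> (P A <= c)%E.
Proof.
case: c => [c| |] le_c; [|by rewrite leey|by have := le_c 0%N; rewrite leeNy_eq].
rewrite measure_partition_series // -[c%:E]mule1 -probability_partition_series1.
rewrite -nneseriesZl; last by move=> n _; exact: measure_ge0.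
apply: lee_nneseries => [n _ _|n _]; first exact: measure_ge0.
apply: le_trans (lee_wpmul2r (measure_ge0 P (B n)) (le_c n)).
by rewrite -probability_cellE.
Qed.

End total_probability.

Section generalized_Bayes_dilation.
Variables (R : realType) (Omega : completePseudoMetricType R).
Local Notation T := (borel_type Omega).

Section dilation.
Variables (lowc upc : set T -> set T -> \bar R) (lowA upA : \bar R).
Variables (B : nat -> set T) (A : set T).
Local Notation inf_low := (ereal_inf (range (fun n => lowc A (B n)))).
Local Notation sup_up := (ereal_sup (range (fun n => upc A (B n)))).

Lemma dilation_no_sure_loss : (inf_low <= lowA)%E -> (lowA <= upA)%E ->
  (upA <= sup_up)%E -> ~ induces_sure_loss lowc upc lowA upA B A.
Proof.
move=> inf_le low_le_up up_le [up_lt|sup_lt].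
- by have := lt_le_trans up_lt (le_trans inf_le low_le_up); rewrite ltxx.
- by have := lt_le_trans sup_lt (le_trans low_le_up up_le); rewrite ltxx.
Qed.

Lemma dilation_no_contraction : (inf_low <= lowA)%E -> (upA <= sup_up)%E ->
  ~ contracts lowc upc lowA upA B A.
Proof.
move=> inf_le up_le [[_ [_ sup_lt]]|[low_lt _]].
- by have := lt_le_trans sup_lt up_le; rewrite ltxx.
- by have := lt_le_trans low_lt inf_le; rewrite ltxx.
Qed.

End dilation.

Variable lowP : set T -> R.

Definition lower_envelope : Prop := forall A, measurable A ->
  (lowP A)%:E = ereal_inf [set P A | P in credal lowP].

Lemma credal_neq0 : lower_envelope -> credal lowP !=set0.
Proof.
move=> envP; apply/set0P/eqP => credal0.
by have := envP _ measurableT; rewrite credal0 image_set0 ereal_inf0.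
Qed.

Lemma lower_le_upper A : lower_envelope -> measurable A ->
  ((lowP A)%:E <= upper lowP A)%E.
Proof.
move=> /credal_neq0[P credP] mA.
by apply: le_trans (credP _ mA) _; apply: ereal_sup_ubound; exists P.
Qed.

Lemma credal_fine_gt0 P X : credal lowP P -> measurable X -> 0 < lowP X ->
  0 < fine (P X).
Proof.
move=> credP mX lowX_gt0; have := credP _ mX.
by rewrite -[P X]fineK ?fin_num_measure // lee_fin; exact: lt_le_trans.
Qed.

Variables (B : nat -> set T) (A : set T).
Hypotheses (partB : measurable_partition B) (B_gt0 : forall n, 0 < lowP (B n)).
Hypothesis mA : measurable A.
Local Notation inf_lowGBR := (ereal_inf (range (fun n => lowGBR lowP A (B n)))).
Local Notation sup_upGBR := (ereal_sup (range (fun n => upGBR lowP A (B n)))).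

Lemma inf_lowGBR_le_credal P : credal lowP P -> (inf_lowGBR <= P A)%E.
Proof.
move: partB => [mB tB cB] credP.
apply: total_probability_lb => // [n|n]; first exact: credal_fine_gt0.
apply: (@le_trans _ _ (lowGBR lowP A (B n))).
  by apply: ereal_inf_lbound; exists n.
by apply: ereal_inf_lbound; exists P.
Qed.

Lemma credal_le_sup_upGBR P : credal lowP P -> (P A <= sup_upGBR)%E.
Proof.
move: partB => [mB tB cB] credP.
apply: total_probability_ub => // [n|n]; first exact: credal_fine_gt0.
apply: (@le_trans _ _ (upGBR lowP A (B n))).
  by apply: ereal_sup_ubound; exists P.
by apply: ereal_sup_ubound; exists n.
Qed.

Lemma inf_lowGBR_le_lower : lower_envelope -> (inf_lowGBR <= (lowP A)%:E)%E.
Proof.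
move=> envP; rewrite envP //.
by apply: le_ereal_inf_tmp => _ [P /inf_lowGBR_le_credal ? <-].
Qed.

Lemma upper_le_sup_upGBR : (upper lowP A <= sup_upGBR)%E.
Proof. by apply: ge_ereal_sup => _ [P /credal_le_sup_upGBR ? <-]. Qed.

End generalized_Bayes_dilation.

Theorem theorem5p2 (R : realType) (Omega : completePseudoMetricType R)
  (lowP : set (borel_type Omega) -> R) (B : nat -> set (borel_type Omega)) :
  separable_complete_metric Omega ->
  choquet_capacity2 lowP ->
  measurable_partition B ->
  (forall n, 0 < lowP (B n)) ->
  forall A : set (borel_type Omega), measurable A ->
    ~ induces_sure_loss (lowGBR lowP) (upGBR lowP)
        (lowP A)%:E (upper lowP A) B A /\
    ~ contracts (lowGBR lowP) (upGBR lowP)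
        (lowP A)%:E (upper lowP A) B A.
Proof.
move=> _ [envP _ _] partB B_gt0 A mA.
have inf_le := inf_lowGBR_le_lower partB B_gt0 mA envP.
have le_sup := upper_le_sup_upGBR partB B_gt0 mA.
split; first exact: dilation_no_sure_loss inf_le (lower_le_upper envP mA) le_sup.
exact: dilation_no_contraction inf_le le_sup.
Qed.
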